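(* For an integral domain $D$, the following conditions are equivalent. (i) The integral closure $\overline{D}$ of $D$ is a Pr\''ufer domain. (ii) The set of Pr\''ufer overrings of $D$ is quasi-compact as a subspace of the space of all overrings of $D$.
   Context: Let $D$ be an integral domain with quotient field $K$. The set of all overrings of $D$ (rings $R$ with $D\subseteq R\subseteq K$) carries the Zariski topology, whose basic open sets are $\{R \mid F\subseteq R\}$ for $F$ ranging among finite subsets of $K$; it is a spectral space. *)

(* Overrings of D are represented as predicates on the
   quotient field K. *)
From mathcomp Require Import all_boot all_algebra.
Set Implicit Arguments. Unset Strict Implicit. Unset Printing Implicit Defensive.
Import GRing.Theory.
Local Open Scope ring_scope.

Section Defs.
Variable K : fieldType.

(* R is a subring of K (hence an integral domain). *)
Definition subring (R : K -> Prop) : Prop :=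
  [/\ R 0, R 1, (forall x y, R x -> R y -> R (x - y))
    & (forall x y, R x -> R y -> R (x * y))].

Definition is_quotient_field (D : K -> Prop) : Prop :=
  forall x : K, exists a b : K, [/\ D a, D b, b != 0 & x = a / b].

Definition overring (D R : K -> Prop) : Prop :=
  subring R /\ (forall x, D x -> R x).

Definition int_closure (D : K -> Prop) : K -> Prop :=
  fun x => exists p : {poly K}, [/\ p \is monic, (forall i, D p`_i) & root p x].

Definition fg_ideal (R I : K -> Prop) : Prop :=
  exists gs : seq K, (forall g, g \in gs -> R g) /\
    forall x, I x <-> exists rs : seq K,
      [/\ size rs = size gs, (forall r, r \in rs -> R r)
        & x = \sum_(i < size gs) rs`_i * gs`_i].

Definition frac_inv (R I : K -> Prop) : K -> Prop :=
  fun y => forall x, I x -> R (y * x).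

Definition mod_prod (I J : K -> Prop) : K -> Prop :=
  fun z => exists s : seq (K * K),
    (forall p, p \in s -> I p.1 /\ J p.2) /\ z = \sum_(p <- s) p.1 * p.2.

Definition invertible (R I : K -> Prop) : Prop :=
  forall z, mod_prod I (frac_inv R I) z <-> R z.

Definition prufer (R : K -> Prop) : Prop :=
  forall I : K -> Prop, fg_ideal R I -> (exists x, I x /\ x != 0) ->
    invertible R I.

(* Open sets of the Zariski topology on the space of overrings of D:
   the topology generated by the basic opens {T | F ⊆ T}, F finite. *)
Definition zariski_open (D : K -> Prop) (U : (K -> Prop) -> Prop) : Prop :=
  forall R, U R -> overring D R /\
    exists F : seq K, (forall x, x \in F -> R x) /\
      forall T, overring D T -> (forall x, x \in F -> T x) -> U T.

Definition quasi_compact (D : K -> Prop) (S : (K -> Prop) -> Prop) : Prop :=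
  forall (I : Type) (U : I -> (K -> Prop) -> Prop),
    (forall i, zariski_open D (U i)) ->
    (forall R, S R -> exists i, U i R) ->
    exists (n : nat) (f : 'I_n -> I), forall R, S R -> exists k, U (f k) R.

End Defs.

(* (i) => (ii): a Prüfer overring R of D is integrally closed, so it contains
   the integral closure D' of D.  An open set containing D' contains a basic
   neighbourhood {T | F ⊆ T} with F ⊆ D', hence every Prüfer overring: one
   member of any open cover already covers them all.
   (ii) => (i): suppose the ideal (a_1, ..., a_n) of D' is not invertible.  The
   open sets U_y = {T | \sum a_i y_i = 1 and all y_i a_l lie in T} cover the
   Prüfer overrings; take a finite subcover U_y1, ..., U_ym.  As y_k is no
   witness in D', some y_i a_l required by U_yk lies outside D', hence outside
   some valuation overring V_k of D.  But a finite intersection of valuation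
   rings is Prüfer and contains D, so it lies in some U_yk: a contradiction.
   Prüfer rings are recognised by the invertibility of the ideals (1, z); in
   V_1 ∩ ... ∩ V_m the inverse of (1, z) comes from 1 / (1 + z + ... + z^P),
   where P is a common multiple of the periods of z in the residue fields. *)

From HB Require Import structures.
From mathcomp Require Import all_boot all_algebra ring.
From mathcomp Require Import boolp.
From mathcomp Require classical_sets.
Set Implicit Arguments. Unset Strict Implicit. Unset Printing Implicit Defensive.
Import GRing.Theory.
Local Open Scope ring_scope.

Section Subring.
Variables (K : fieldType) (R : K -> Prop).
Hypothesis hR : subring R.

Lemma subring0 : R 0. Proof. by case: hR. Qed.
Lemma subring1 : R 1. Proof. by case: hR. Qed.
Lemma subringB x y : R x -> R y -> R (x - y).
Proof. by case: hR => _ _ + _; apply. Qed.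
Lemma subringM x y : R x -> R y -> R (x * y).
Proof. by case: hR => _ _ _; apply. Qed.

Lemma subringN x : R x -> R (- x).
Proof. by move=> Rx; rewrite -sub0r; apply: subringB => //; apply: subring0. Qed.

Lemma subringD x y : R x -> R y -> R (x + y).
Proof.
by move=> Rx Ry; rewrite -[y]opprK; apply: subringB => //; apply: subringN.
Qed.

Lemma subring_bool (b : bool) : R b%:R.
Proof. by case: b; [apply: subring1 | apply: subring0]. Qed.

Lemma subringX x n : R x -> R (x ^+ n).
Proof.
move=> Rx; elim: n => [|n IH]; first by rewrite expr0; apply: subring1.
by rewrite exprS; apply: subringM.
Qed.

Lemma subring_sum (I : Type) (r : seq I) (P : pred I) (F : I -> K) :
  (forall i, P i -> R (F i)) -> R (\sum_(i <- r | P i) F i).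
Proof. by move=> RF; apply: big_ind => //; [apply: subring0 | apply: subringD]. Qed.

End Subring.

Lemma quotient_field_overring (K : fieldType) (D R : K -> Prop) :
  is_quotient_field D -> (forall x, D x -> R x) -> is_quotient_field R.
Proof.
by move=> hK DR x; have [a [b [Da Db b0 ->]]] := hK x; exists a, b; split; auto.
Qed.

Section IntegralClosure.
Variables (K : fieldType) (D : K -> Prop).
Hypothesis hD : subring D.

(* D as a ring type, to use the theory of integralOver. *)
Definition subring_pred : pred K := fun x => `[< D x >].

Lemma subring_pred_closed : subring_closed subring_pred.
Proof.
split; first by apply/asboolP; apply: subring1.
- by move=> x y /asboolP Dx /asboolP Dy; apply/asboolP; apply: subringB.
- by move=> x y /asboolP Dx /asboolP Dy; apply/asboolP; apply: subringM.
Qed.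

HB.instance Definition _ :=
  GRing.isSubringClosed.Build K subring_pred subring_pred_closed.

Record subring_type :=
  SubringElt { subring_val : K; _ : subring_val \in subring_pred }.
HB.instance Definition _ := [isSub for subring_val].
HB.instance Definition _ := [Choice of subring_type by <:].
HB.instance Definition _ := [SubChoice_isSubComNzRing of subring_type by <:].

Lemma subring_valP (u : subring_type) : D (val u).
Proof. by case: u => x /= /asboolP. Qed.

Lemma int_closureP x : int_closure D x <-> integralOver (val : subring_type -> K) x.
Proof.
split; last first.
  case=> q mq rq; exists (map_poly val q); split; first exact: monic_map.
    by move=> i; rewrite coef_map; apply: subring_valP.
  exact: rq.
case=> p [mp Dp rp].
pose q : {poly subring_type} := \poly_(i < size p) insubd (0 : subring_type) p`_i.
have qp : map_poly val q = p.
  apply/polyP => i; rewrite coef_map coef_poly; case: ltnP => hi.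
    by rewrite /= insubdK //; apply/asboolP.
  by rewrite nth_default.
exists q; last by rewrite qp.
by move: mp; rewrite -qp monicE lead_coef_map_inj //; apply: val_inj.
Qed.

Lemma subring_int_closure : subring (int_closure D).
Proof.
split.
- by apply/int_closureP; apply: integral0.
- by apply/int_closureP; apply: integral1.
- move=> x y /int_closureP ix /int_closureP iy.
  by apply/int_closureP; apply: integral_sub.
- move=> x y /int_closureP ix /int_closureP iy.
  by apply/int_closureP; apply: integral_mul.
Qed.

Lemma overring_int_closure : overring D (int_closure D).
Proof.
split; first exact: subring_int_closure.
move=> x Dx; apply/int_closureP.
have -> : x = val (insubd (0 : subring_type) x) by rewrite insubdK //; apply/asboolP.
exact: integral_id.
Qed.

End IntegralClosure.

Section InverseWitness.
Variables (K : fieldType) (R : K -> Prop).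
Hypothesis hR : subring R.

(* Each y i lies in I^-1, for I the fractional ideal generated by
   a 0, ..., a n.-1, and \sum_i a i * y i = 1 witnesses I * I^-1 = R. *)
Definition is_inv_witness (n : nat) (a y : nat -> K) :=
  \sum_(i < n) a i * y i = 1 /\
  forall i l, (i < n)%N -> (l < n)%N -> R (y i * a l).

Definition inv_witness (n : nat) (a : nat -> K) := exists y, is_inv_witness n a y.

Definition ideal_span (gs : seq K) : K -> Prop := fun x => exists rs : seq K,
  [/\ size rs = size gs, (forall r, r \in rs -> R r)
    & x = \sum_(i < size gs) rs`_i * gs`_i].

Lemma ideal_span_nth gs i : (i < size gs)%N -> ideal_span gs gs`_i.
Proof.
move=> hi; exists (mkseq (fun j => (j == i)%:R) (size gs)); split.
- by rewrite size_mkseq.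
- by move=> r /mapP [j _ ->]; apply: (subring_bool hR).
- rewrite (bigD1 (Ordinal hi)) //= nth_mkseq // eqxx mul1r big1 ?addr0 // => j.
  by rewrite -val_eqE /= nth_mkseq // => /negbTE ->; rewrite mul0r.
Qed.

Lemma ideal_spanP gs x : ideal_span gs x ->
  exists2 rs : nat -> K, (forall i, R (rs i)) & x = \sum_(i < size gs) rs i * gs`_i.
Proof.
case=> rs [_ Rrs ->]; exists (nth 0 rs) => // i.
have [hi|hi] := ltnP i (size rs); first by apply/Rrs/mem_nth.
by rewrite nth_default //; apply: (subring0 hR).
Qed.

Lemma mod_prod_span_inv gs z :
  mod_prod (ideal_span gs) (frac_inv R (ideal_span gs)) z ->
  exists y : nat -> K, z = \sum_(i < size gs) gs`_i * y i /\
    forall i l, (i < size gs)%N -> (l < size gs)%N -> R (y i * gs`_l).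
Proof.
case=> s [hs ->] {z}; elim: s hs => [|[p1 p2] s IH] hs.
  exists (fun=> 0); rewrite big_nil big1 => [|i _]; last by rewrite mulr0.
  by split=> // i l _ _; rewrite mul0r; apply: (subring0 hR).
have /= [/ideal_spanP [rs Rrs ->] p2_inv] := hs _ (mem_head _ _).
rewrite big_cons /=.
have [|y [-> Ry]] := IH; first by move=> p sp; apply: hs; rewrite inE sp orbT.
exists (fun i => rs i * p2 + y i); split.
  by rewrite mulr_suml -big_split /=; apply: eq_bigr => i _; ring.
move=> i l hi hl.
have -> : (rs i * p2 + y i) * gs`_l = rs i * (p2 * gs`_l) + y i * gs`_l by ring.
apply: (subringD hR) => //; last exact: Ry.
by apply: (subringM hR) => //; apply/p2_inv/ideal_span_nth.
Qed.

Lemma inv_witness_of_prufer gs : prufer R -> (forall g, g \in gs -> R g) ->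
  (exists2 i, (i < size gs)%N & gs`_i != 0) -> inv_witness (size gs) (nth 0 gs).
Proof.
move=> hP Rgs [i hi gi0].
have fg : fg_ideal R (ideal_span gs) by exists gs; split.
have /(hP _ fg) inv : exists x, ideal_span gs x /\ x != 0.
  by exists gs`_i; split => //; apply: ideal_span_nth.
have [y [y1 Ry]] := mod_prod_span_inv (proj2 (inv 1) (subring1 hR)).
by exists y; split.
Qed.

Lemma invertible_of_inv_witness gs (I : K -> Prop) :
  (forall x, I x <-> ideal_span gs x) -> inv_witness (size gs) (nth 0 gs) ->
  invertible R I.
Proof.
move=> hI [y [y1 Ry]] z; split.
  case=> s [hs ->]; rewrite big_seq; apply: (subring_sum hR) => p /hs [Ip1 p2_inv].
  by rewrite mulrC; apply: p2_inv.
move=> Rz; exists [seq (gs`_i, y i * z) | i <- iota 0 (size gs)]; split.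
  move=> p /mapP [i]; rewrite mem_iota add0n => /andP [_ hi] ->.
  split; first exact/hI/ideal_span_nth.
  move=> w /hI/ideal_spanP [rs Rrs ->]; rewrite mulr_sumr.
  apply: (subring_sum hR) => l _.
  have -> : y i * z * (rs l * gs`_l) = z * rs l * (y i * gs`_l) by ring.
  by apply: (subringM hR); [apply: (subringM hR) | apply: Ry].
have -> : iota 0 (size gs) = index_iota 0 (size gs) by rewrite /index_iota subn0.
rewrite big_map big_mkord -[LHS]mul1r -y1 mulr_suml.
by apply: eq_bigr => i _; rewrite mulrA.
Qed.

Lemma prufer_of_inv_witness :
  (forall gs, (forall g, g \in gs -> R g) ->
    (exists2 i, (i < size gs)%N & gs`_i != 0) -> inv_witness (size gs) (nth 0 gs)) ->
  prufer R.
Proof.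
move=> hw I [gs [Rgs hI]] [x [Ix x0]].
apply: (invertible_of_inv_witness hI); apply: hw => //.
have [/existsP [i gi0]|/existsPn gs0] := boolP [exists i : 'I_(size gs), gs`_i != 0].
  by exists i.
have [rs _ xE] := ideal_spanP (proj1 (hI x) Ix).
move: x0; rewrite xE big1 ?eqxx // => i _.
by move/negPn/eqP: (gs0 i) => ->; rewrite mulr0.
Qed.

End InverseWitness.

Section InvertiblePair.
Variables (K : fieldType) (R : K -> Prop).
Hypothesis hR : subring R.

(* The fractional ideal (1, z) is invertible, with inverse elements s and w
   satisfying s * 1 + w * z = 1. *)
Definition invertible_pair (z : K) :=
  exists s w, [/\ R s, R (s * z), R w & 1 - s = z * w].

Lemma invertible_pair_of_prufer : prufer R -> is_quotient_field R ->
  forall z, invertible_pair z.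
Proof.
move=> hP hq z; have [a [b [Ra Rb b0 ->]]] := hq z.
have Rba : forall g, g \in [:: b; a] -> R g.
  by move=> g; rewrite !inE => /orP [] /eqP ->.
have [y [y1 Ry]] := inv_witness_of_prufer hR hP Rba (ex_intro2 _ _ 0%N isT b0).
move: y1 (Ry 0%N 0%N isT isT) (Ry 0%N 1%N isT isT) (Ry 1%N 0%N isT isT) => /=.
rewrite !big_ord_recl big_ord0 /= addr0 => y1 Ryb Rya Rzb.
exists (b * y 0%N), (b * y 1%N); split.
- by rewrite mulrC.
- by have -> : b * y 0%N * (a / b) = y 0%N * a by field.
- by rewrite mulrC.
- have -> : a / b * (b * y 1%N) = a * y 1%N by field.
  by rewrite -y1; ring.
Qed.

Lemma monic_root_scaled (p : {poly K}) x w m :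
  p \is monic -> (forall i, R p`_i) -> root p x -> size p = m.+2 ->
  R w -> R (x * w) -> R ((x * w) ^+ m * x).
Proof.
move=> mp Rp rp sp Rw Rxw.
have lead1 : p`_m.+1 = 1 by move/monicP: mp; rewrite lead_coefE sp.
move: rp; rewrite /root horner_coef sp big_ord_recr /= lead1 mul1r.
rewrite addrC addr_eq0 => /eqP xm.
have -> : (x * w) ^+ m * x = - \sum_(i < m.+1) p`_i * ((x * w) ^+ i * w ^+ (m - i)).
  rewrite exprMn mulrAC -exprSr xm mulNr mulr_suml; congr (- _).
  apply: eq_bigr => i _; rewrite -mulrA; congr (_ * _).
  have hi : (i <= m)%N by rewrite -ltnS.
  by rewrite exprMn -mulrA -exprD subnKC // mulrC.
apply: (subringN hR); apply: (subring_sum hR) => i _.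
by apply: (subringM hR) => //; apply: (subringM hR); apply: (subringX hR).
Qed.

Lemma integral_mem_of_invertible_pair (p : {poly K}) x :
  p \is monic -> (forall i, R p`_i) -> root p x -> invertible_pair x -> R x.
Proof.
move=> mp Rp rp [s [w [Rs Rsx Rw sw]]].
have Rxw : R (x * w) by rewrite -sw; apply: (subringB hR) => //; apply: (subring1 hR).
have [m sp] : exists m, size p = m.+2.
  case sp: (size p) => [|[|m]]; last by exists m.
  - by move: (monic_neq0 mp); rewrite -size_poly_gt0 sp.
  - move/monicP: mp rp; rewrite lead_coefE sp /root horner_coef sp big_ord1 => ->.
    by rewrite mul1r oner_eq0.
have geo_x : 1 - (x * w) ^+ m = s * \sum_(i < m) (x * w) ^+ i.
  by rewrite -opprB subrX1 -mulNr opprB -sw subKr.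
have -> : x = (x * w) ^+ m * x + (s * x) * \sum_(i < m) (x * w) ^+ i.
  by rewrite mulrAC -mulrDl -geo_x addrC subrK mul1r.
apply: (subringD hR); first exact: monic_root_scaled sp Rw Rxw.
by apply: (subringM hR) => //; apply: (subring_sum hR) => i _; apply: (subringX hR).
Qed.

Lemma int_closure_sub_prufer (D : K -> Prop) : prufer R -> is_quotient_field D ->
  (forall x, D x -> R x) -> forall x, int_closure D x -> R x.
Proof.
move=> hP hK DR x [p [mp Dp rp]].
apply: (integral_mem_of_invertible_pair mp _ rp) => [i|]; first exact/DR.
exact: invertible_pair_of_prufer hP (quotient_field_overring hK DR) x.
Qed.

(* Stated as a * (a * u + b * w) = a so that u = w = 0 does for a = 0. *)
Lemma two_witness a b : invertible_pair (b / a) -> exists u w,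
  [/\ R (u * a), R (u * b), R (w * a), R (w * b) & a * (a * u + b * w) = a].
Proof.
have [-> _|a0 [s [w [Rs Rsz Rw sw]]]] := eqVneq a 0.
  by exists 0, 0; rewrite !mul0r; split => //; apply: (subring0 hR).
exists (s / a), (w / a); split.
- by rewrite mulfVK.
- by rewrite mulrAC -mulrA.
- by rewrite mulfVK.
- have -> : w / a * b = 1 - s by rewrite sw mulrAC -mulrA mulrC.
  by apply: (subringB hR) => //; apply: (subring1 hR).
- have -> : a * (s / a) + b * (w / a) = s + b / a * w by field.
  by rewrite -sw addrC subrK mulr1.
Qed.

Lemma inv_witnessS n a : (forall z, invertible_pair z) ->
  inv_witness R n a -> inv_witness R n.+1 a.
Proof.
move=> pairs [y [y1 Ry]].
have /choice [uw huw] : forall i, exists uw : K * K,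
    [/\ R (uw.1 * a i), R (uw.1 * a n), R (uw.2 * a i), R (uw.2 * a n)
      & a i * (a i * uw.1 + a n * uw.2) = a i].
  by move=> i; have [u [w hw]] := two_witness (pairs (a n / a i)); exists (u, w).
have Rterm i l c : (i < n)%N -> (l <= n)%N -> R (c * a i) -> R (c * a n) ->
    R (y i * a i * c * a l).
  move=> hi; rewrite leq_eqVlt => /orP [/eqP -> | hl] Rci Rcn.
    by rewrite -mulrA; apply: (subringM hR) => //; apply: Ry.
  have -> : y i * a i * c * a l = (y i * a l) * (c * a i) by ring.
  by apply: (subringM hR) => //; apply: Ry.
pose Y j := if (j < n)%N then y j * a j * (uw j).1
            else \sum_(i < n) y i * a i * (uw i).2.
exists Y; split.
  rewrite big_ord_recr /= {2}/Y ltnn.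
  under eq_bigr => i _ do rewrite /Y ltn_ord.
  rewrite mulr_sumr -big_split -y1; apply: eq_bigr => i _ /=.
  have [_ _ _ _ e] := huw i.
  by rewrite -[in RHS]e; ring.
move=> j l; rewrite !ltnS /Y => hj hl; case: ltnP => hjn.
  by have [? ? _ _ _] := huw j; apply: Rterm.
rewrite mulr_suml; apply: (subring_sum hR) => i _.
by have [_ _ ? ? _] := huw i; apply: Rterm.
Qed.

Lemma inv_witness_last n a : (forall i, (i < n)%N -> a i = 0) -> a n != 0 ->
  inv_witness R n.+1 a.
Proof.
move=> a0 an0; exists (fun j => if j == n then (a n)^-1 else 0); split.
  rewrite big_ord_recr /= eqxx mulfV // big1 ?add0r // => i _.
  by rewrite (ltn_eqF (ltn_ord i)) mulr0.
move=> j l _; rewrite ltnS leq_eqVlt => /orP [/eqP -> | /a0 ->]; last first.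
  by rewrite mulr0; apply: (subring0 hR).
case: eqP => _; first by rewrite mulVf //; apply: (subring1 hR).
by rewrite mul0r; apply: (subring0 hR).
Qed.

Lemma inv_witness_of_invertible_pairs n a : (forall z, invertible_pair z) ->
  (exists2 i, (i < n)%N & a i != 0) -> inv_witness R n a.
Proof.
move=> pairs; elim: n => [|n IH] [i hi ai0] //.
have [a_nz|a0] := pselect (exists2 j, (j < n)%N & a j != 0).
  exact/inv_witnessS/IH.
apply: inv_witness_last => [j jn|].
  by apply: contrapT => /eqP aj0; apply: a0; exists j.
move: hi; rewrite ltnS leq_eqVlt => /orP [/eqP <- // | ilt].
by case: a0; exists i.
Qed.

Lemma prufer_of_invertible_pairs : (forall z, invertible_pair z) -> prufer R.
Proof.
move=> pairs; apply: (prufer_of_inv_witness hR) => gs _.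
exact: inv_witness_of_invertible_pairs.
Qed.

End InvertiblePair.

Definition valring (K : fieldType) (V : K -> Prop) :=
  subring V /\ forall z, z != 0 -> V z \/ V z^-1.

Section Geometric.
Variable K : fieldType.

Definition geo (z : K) (N : nat) := \sum_(i < N) z ^+ i.

Lemma geo0 z : geo z 0 = 0. Proof. by rewrite /geo big_ord0. Qed.

Lemma geoS z N : geo z N.+1 = geo z N + z ^+ N.
Proof. by rewrite /geo big_ord_recr. Qed.

Lemma geo1 z : geo z 1 = 1. Proof. by rewrite geoS geo0 add0r expr0. Qed.

Lemma geoD z a b : geo z (a + b) = geo z a + z ^+ a * geo z b.
Proof.
elim: b => [|b IH]; first by rewrite addn0 geo0 mulr0 addr0.
by rewrite addnS !geoS IH exprD mulrDr addrA.
Qed.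

Lemma geoSl z N : geo z N.+1 = 1 + z * geo z N.
Proof. by rewrite -add1n geoD geo1 expr1. Qed.

Lemma geoV z N : z != 0 -> geo z N.+1 = z ^+ N * geo z^-1 N.+1.
Proof.
move=> z0; elim: N => [|N IH]; first by rewrite expr0 mul1r !geo1.
by rewrite geoS IH [in RHS]geoSl exprS; field.
Qed.

Lemma subring_geo (R : K -> Prop) z : subring R -> R z -> forall N, R (geo z N).
Proof. by move=> hR Rz N; apply: (subring_sum hR) => i _; apply: (subringX hR). Qed.

End Geometric.

Section ValuationRing.
Variables (K : fieldType) (V : K -> Prop).
Hypothesis hV : valring V.
Let hS : subring V := proj1 hV.

(* Units of V, when applied to elements of V. *)
Definition vunit (a : K) := a != 0 /\ V a^-1.

Definition vmax (a : K) := V a /\ ~ vunit a.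

Lemma vmax0 : vmax 0. Proof. by split; [apply: (subring0 hS) | case=> /eqP]. Qed.

Lemma vmaxM a c : V c -> vmax a -> vmax (c * a).
Proof.
move=> Vc [Va na]; split; first exact: (subringM hS).
case=> ca0 Vca; apply: na; split; first by apply: contraNneq ca0 => ->; rewrite mulr0.
have c0 : c != 0 by apply: contraNneq ca0 => ->; rewrite mul0r.
have -> : a^-1 = c * (c * a)^-1 by rewrite invfM mulrA mulfV ?mul1r.
exact: (subringM hS).
Qed.

Lemma vmaxD a b : vmax a -> vmax b -> vmax (a + b).
Proof.
move=> [Va na] [Vb nb]; split; first exact: (subringD hS).
case=> ab0 Vab.
have [a0|a0] := eqVneq a 0; first by apply: nb; move: ab0 Vab; rewrite a0 add0r.
have [b0|b0] := eqVneq b 0; first by apply: na; move: ab0 Vab; rewrite b0 addr0.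
have V1 := subring1 hS.
have [Vab'|Vba] := proj2 hV (a / b) (mulf_neq0 a0 (invr_neq0 b0)).
  apply: nb; split => //.
  have -> : b^-1 = (a / b + 1) * (a + b)^-1 by field; rewrite ab0 b0.
  by apply: (subringM hS) => //; apply: (subringD hS).
apply: na; split => //.
have -> : a^-1 = (b / a + 1) * (a + b)^-1 by field; rewrite ab0 a0.
by apply: (subringM hS) => //; apply: (subringD hS); rewrite // -invf_div.
Qed.

Lemma vmaxN a : vmax a -> vmax (- a).
Proof.
move=> ha; rewrite -mulN1r; apply: vmaxM ha.
by apply: (subringN hS); apply: (subring1 hS).
Qed.

Lemma vunit1D t : vmax t -> vunit (1 + t).
Proof.
move=> ht; apply: contrapT => n1t.
have V1t : V (1 + t) by apply: (subringD hS) ht.1; apply: (subring1 hS).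
have := vmaxD (conj V1t n1t) (vmaxN ht); rewrite addrK => -[_]; apply.
by split; [exact: oner_neq0 | rewrite invr1; apply: (subring1 hS)].
Qed.

Lemma vunit_geo u M : vmax u -> vunit (geo u M.+1).
Proof.
move=> hu; rewrite geoSl; apply: vunit1D; rewrite mulrC.
by apply: vmaxM (hu); apply: (subring_geo hS); case: hu.
Qed.

Lemma geo_nonunit_period z : z != 0 -> V z -> V z^-1 ->
  exists2 r, (2 <= r)%N & forall N, ~ vunit (geo z N) -> (r %| N)%N.
Proof.
move=> z0 Vz Vzi.
have [[N0 hN0]|all_unit] :=
  pselect (exists N, (0 < N)%N /\ ~ vunit (geo z N)); last first.
  by exists 2%N => // -[|N] // hN; case: all_unit; exists N.+1.
have /ex_minnP [r /asboolP [r_gt0 hr] rmin] :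
    exists N, `[< (0 < N)%N /\ ~ vunit (geo z N) >] by exists N0; apply/asboolP.
have vmax_geo N : ~ vunit (geo z N) -> vmax (geo z N).
  by move=> hN; split => //; apply: (subring_geo hS).
have vmax_geo_mul q : vmax (geo z (q * r)).
  elim: q => [|q IH]; first by rewrite mul0n geo0; apply: vmax0.
  rewrite mulSn geoD; apply: vmaxD; first exact: vmax_geo.
  by apply: vmaxM IH; apply: (subringX hS).
exists r.
  case: r r_gt0 hr {rmin vmax_geo_mul} => [|[|r]] // _ [].
  by rewrite geo1; split; [apply: oner_neq0 | rewrite invr1; apply: (subring1 hS)].
move=> N hN; have eN := divn_eq N r.
set q := (N %/ r)%N in eN; set s := (N %% r)%N in eN.
have [s0|s_gt0] := posnP s; first by apply/dvdnP; exists q; rewrite eN s0 addn0.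
have vmax_s : vmax (geo z s).
  have -> : geo z s = z^-1 ^+ (q * r) * (geo z N - geo z (q * r)).
    by rewrite eN geoD addrC addKr mulrA -exprMn mulVf ?expr1n ?mul1r.
  apply: vmaxM; first exact: (subringX hS).
  by rewrite addrC; apply: vmaxD; [apply: vmaxN | apply: vmax_geo].
have : (r <= s)%N by apply: rmin; apply/asboolP; split => //; case: vmax_s.
by rewrite leqNgt ltn_pmod.
Qed.

Lemma geo_pair_mem z M : z != 0 -> (V z -> V z^-1 -> vunit (geo z M.+2)) ->
  [/\ geo z M.+2 != 0, V (geo z M.+2)^-1, V ((geo z M.+2)^-1 * z)
    & V (geo z M.+1 / geo z M.+2)].
Proof.
move=> z0 hunit.
have finish : V z -> vunit (geo z M.+2) -> [/\ geo z M.+2 != 0, V (geo z M.+2)^-1,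
    V ((geo z M.+2)^-1 * z) & V (geo z M.+1 / geo z M.+2)].
  move=> Vz [g0 Vg]; split => //; apply: (subringM hS) => //.
  exact: (subring_geo hS).
have [Vz|nVz] := pselect (V z).
  have [Vzi|nVzi] := pselect (V z^-1); first exact: finish Vz (hunit Vz Vzi).
  apply: (finish Vz); rewrite geoSl; apply: vunit1D; rewrite mulrC.
  by apply: vmaxM; [apply: (subring_geo hS) | split => // -[]].
have Vzi : V z^-1 by case: (proj2 hV z z0).
have hu : vmax z^-1 by split => // -[_]; rewrite invrK.
have [G0 VG] := vunit_geo M.+1 hu.
have eg := geoV M.+1 z0; have eg' := geoV M z0.
have g0 : geo z M.+2 != 0 by rewrite eg mulf_neq0 // expf_neq0.
have gV : (geo z M.+2)^-1 = z^-1 ^+ M.+1 * (geo z^-1 M.+2)^-1.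
  by rewrite eg invfM exprVn.
split => //.
- by rewrite gV; apply: (subringM hS) => //; apply: (subringX hS).
- have -> : (geo z M.+2)^-1 * z = z^-1 ^+ M * (geo z^-1 M.+2)^-1.
    by rewrite gV exprS; field; rewrite G0 z0.
  by apply: (subringM hS) => //; apply: (subringX hS).
- have -> : geo z M.+1 / geo z M.+2 = z^-1 * geo z^-1 M.+1 * (geo z^-1 M.+2)^-1.
    by rewrite eg' gV exprS exprVn; field; rewrite G0 z0 expf_neq0.
  apply: (subringM hS) => //; apply: (subringM hS) => //.
  exact: (subring_geo hS).
Qed.

End ValuationRing.

Section FiniteIntersection.
Variables (K : fieldType) (I : finType) (Vs : I -> K -> Prop).
Hypothesis hVs : forall k, valring (Vs k).

Definition bigcap_ring : K -> Prop := fun x => forall k, Vs k x.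

Lemma subring_bigcap : subring bigcap_ring.
Proof.
have hS k := proj1 (hVs k); split.
- by move=> k; apply: (subring0 (hS k)).
- by move=> k; apply: (subring1 (hS k)).
- by move=> x y Rx Ry k; apply: (subringB (hS k)).
- by move=> x y Rx Ry k; apply: (subringM (hS k)).
Qed.

(* When z is a unit of Vs k, geo z N is a non-unit of Vs k only for N a
   multiple of some r k >= 2; so geo z (\prod_k r k).+1 is a unit of every
   Vs k, and its inverse gives the invertible pair. *)
Lemma invertible_pair_bigcap z : invertible_pair bigcap_ring z.
Proof.
have hS k := proj1 (hVs k).
have [->|z0] := eqVneq z 0.
  exists 1, 0; rewrite !mulr0 subrr; split => // k.
  - exact: (subring1 (hS k)).
  - exact: (subring0 (hS k)).
  - exact: (subring0 (hS k)).
have /choice [r hr] : forall k, exists r, (2 <= r)%N /\ (Vs k z -> Vs k z^-1 ->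
    forall N, ~ vunit (Vs k) (geo z N) -> (r %| N)%N).
  move=> k; have [[Vz Vzi]|nV] := pselect (Vs k z /\ Vs k z^-1).
    by have [r r2 hr] := geo_nonunit_period (hVs k) z0 Vz Vzi; exists r.
  by exists 2%N; split => // Vz Vzi; case: nV.
have P_gt0 : (0 < \prod_k r k)%N.
  by apply: prodn_gt0 => k; have [r2 _] := hr k; apply: leq_trans r2.
pose M := (\prod_k r k).-1.
have hk k : [/\ geo z M.+2 != 0, Vs k (geo z M.+2)^-1,
    Vs k ((geo z M.+2)^-1 * z) & Vs k (geo z M.+1 / geo z M.+2)].
  apply: (geo_pair_mem (hVs k) z0) => Vz Vzi; apply: contrapT => nunit.
  have [r2 /(_ Vz Vzi _ nunit)] := hr k.
  rewrite /M prednK // -addn1 dvdn_addr ?dvdn1 => [/eqP r1|].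
    by rewrite r1 in r2.
  by rewrite (bigD1 k) //= dvdn_mulr.
have [g0|g0] := eqVneq (geo z M.+2) 0.
  by exists 1, 0; rewrite mulr0 subrr; split => // k; case: (hk k); rewrite g0 eqxx.
exists (geo z M.+2)^-1, (geo z M.+1 / geo z M.+2); split => [k|k|k|].
- by case: (hk k).
- by case: (hk k).
- by case: (hk k).
- by move: g0; rewrite geoSl => g0; field.
Qed.

Lemma prufer_bigcap : prufer bigcap_ring.
Proof.
exact: prufer_of_invertible_pairs subring_bigcap invertible_pair_bigcap.
Qed.

End FiniteIntersection.

Section Adjoin.
Variables (K : fieldType) (S : K -> Prop).
Hypothesis hS : subring S.

Definition adjoin (z : K) : K -> Prop :=
  fun t => exists2 p : {poly K}, (forall i, S p`_i) & t = p.[z].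

Lemma subring_adjoin z : subring (adjoin z).
Proof.
split.
- by exists 0 => [i|]; rewrite ?horner0 // coef0; apply: (subring0 hS).
- by exists 1 => [i|]; rewrite ?hornerC // coef1; apply: (subring_bool hS).
- move=> _ _ [p Sp ->] [q Sq ->]; exists (p - q) => [i|].
    by rewrite coefB; apply: (subringB hS).
  by rewrite hornerD hornerN.
- move=> _ _ [p Sp ->] [q Sq ->]; exists (p * q) => [i|]; last by rewrite hornerM.
  by rewrite coefM; apply: (subring_sum hS) => j _; apply: (subringM hS).
Qed.

Lemma adjoin_ge z t : S t -> adjoin z t.
Proof.
move=> St; exists t%:P => [i|]; rewrite ?hornerC // coefC.
by case: eqP => // _; apply: (subring0 hS).
Qed.

Lemma adjoin_mem z : adjoin z z.
Proof. by exists 'X => [i|]; rewrite ?hornerX // coefX; apply: (subring_bool hS). Qed.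

End Adjoin.

Lemma horner_inv_rev (K : fieldType) (p : {poly K}) z n : z != 0 ->
  (size p <= n.+1)%N -> z ^+ n * p.[z^-1] = \sum_(i < n.+1) p`_i * z ^+ (n - i).
Proof.
move=> z0 sp; rewrite (horner_coef_wide _ sp) mulr_sumr; apply: eq_bigr => i _.
have hi : (i <= n)%N by rewrite -ltnS.
rewrite mulrCA; congr (_ * _); apply: (mulIf (expf_neq0 i z0)).
by rewrite -exprD subnK // -mulrA -exprMn mulVf // expr1n mulr1.
Qed.

Lemma notin_adjoin_inv (K : fieldType) (D : K -> Prop) x : subring D ->
  ~ int_closure D x -> x != 0 -> ~ adjoin D x^-1 x.
Proof.
move=> hD nix x0 [p Dp px]; apply: nix.
pose m := (size p).-1.
have sp : (size p <= m.+1)%N by rewrite /m; case: (size p).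
pose q := \poly_(i < m.+2) (if i == m.+1 then 1 else - p`_(m - i)).
have sq : size q = m.+2 by rewrite size_poly_eq // eqxx oner_neq0.
exists q; split.
- by rewrite monicE lead_coefE sq coef_poly ltnSn eqxx.
- move=> i; rewrite coef_poly; case: ltnP => _; last exact: (subring0 hD).
  by case: eqP => _; [apply: (subring1 hD) | apply: (subringN hD)].
rewrite /root horner_poly big_ord_recr /= eqxx mul1r.
have -> : \sum_(i < m.+1) (if i == m.+1 :> nat then 1 else - p`_(m - i)) * x ^+ i
    = - \sum_(i < m.+1) p`_i * x ^+ (m - i).
  rewrite (reindex_inj rev_ord_inj) -sumrN; apply: eq_bigr => i _ /=.
  have hi : (i <= m)%N by rewrite -ltnS.
  rewrite subSS ifF; last by apply/negbTE; rewrite neq_ltn ltnS leq_subr.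
  by rewrite subKn // mulNr.
by rewrite -horner_inv_rev // -px -exprSr addrC subrr.
Qed.

Section MaximalAvoidingRing.
Variables (K : fieldType) (D : K -> Prop) (x : K).
Hypothesis x0 : x != 0.

Definition avoiding (S : K -> Prop) :=
  [/\ subring S, forall d, D d -> S d, S x^-1 & ~ S x].

Variable S : K -> Prop.
Hypothesis avS : avoiding S.
Hypothesis maxS :
  forall T, avoiding T -> (forall t, S t -> T t) -> forall t, T t -> S t.

Let hS : subring S. Proof. by case: avS. Qed.
Let Sy : S x^-1. Proof. by case: avS. Qed.
Let nSx : ~ S x. Proof. by case: avS. Qed.

Lemma mem_or_adjoin z : S z \/ adjoin S z x.
Proof.
have [|nadj] := pselect (adjoin S z x); [by right | left].
apply: (maxS (T := adjoin S z)); last exact: adjoin_mem.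
- case: avS => _ DS _ _; split => [||//|//]; first exact: (subring_adjoin hS).
    by move=> d /DS; apply: (adjoin_ge hS).
  exact: (adjoin_ge hS).
- by move=> t; apply: (adjoin_ge hS).
Qed.

Lemma expr1B t k : S t -> exists2 b, S b & (1 - x^-1 * t) ^+ k = 1 - x^-1 * b.
Proof.
move=> St; elim: k => [|k [b Sb e]].
  by exists 0; [apply: (subring0 hS) | rewrite expr0 mulr0 subr0].
exists (t + b - x^-1 * t * b); last by rewrite exprS e; ring.
apply: (subringB hS); first exact: (subringD hS).
by apply: (subringM hS) => //; apply: (subringM hS).
Qed.

(* x^-1 lies in the Jacobson radical of S. *)
Lemma unit1B t : S t -> 1 - x^-1 * t != 0 /\ S (1 - x^-1 * t)^-1.
Proof.
move=> St; set v := 1 - x^-1 * t.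
have v0 : v != 0.
  apply: contra_notN nSx; rewrite /v subr_eq0 => /eqP t1.
  by rewrite -[x]mulr1 t1 mulrA mulfV // mul1r.
split => //; case: (mem_or_adjoin v^-1) => // -[p Sp px].
have Sv : S v by apply: (subringB hS); [apply: (subring1 hS) | apply: (subringM hS)].
set A := \sum_(i < (size p).+1) p`_i * v ^+ (size p - i).
have SA : S A.
  by apply: (subring_sum hS) => i _; apply: (subringM hS) => //; apply: (subringX hS).
have vA : v ^+ size p * x = A by rewrite px horner_inv_rev.
have [b Sb vb] := expr1B (size p) St.
have sum1 : x^-1 * (A + b) = 1 by rewrite mulrDr -vA mulrCA mulVf // mulr1 vb subrK.
case: nSx; rewrite -[x]mulr1 -sum1 mulrA mulfV // mul1r.
exact: (subringD hS).
Qed.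

(* x = q.[z^-1] gives z ^+ n * (1 - x^-1 * q`_0) as a combination of lower
   powers of z, which eliminates the leading term of p. *)
Lemma horner_rep_shrink z (p q : {poly K}) : z != 0 ->
  (forall i, S p`_i) -> (forall i, S q`_i) -> x = p.[z] -> x = q.[z^-1] ->
  (size q <= size p)%N ->
  exists p' : {poly K}, [/\ forall i, S p'`_i, (size p' < size p)%N & x = p'.[z]].
Proof.
move=> z0 Sp Sq px qx le_qp.
case sp: (size p) => [|n].
  by move: x0; rewrite px horner_coef sp big_ord0 eqxx.
have [v0 Sc] := unit1B (Sq 0%N).
set c := (1 - x^-1 * q`_0)^-1 in Sc.
pose p' := \poly_(i < n) (p`_i + p`_n * x^-1 * c * q`_(n - i)).
exists p'; split.
- move=> i; rewrite coef_poly; case: ltnP => _; last exact: (subring0 hS).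
  apply: (subringD hS) => //; do 3!apply: (subringM hS) => //.
- by rewrite ltnS size_poly.
have hA : \sum_(i < n) q`_(n - i) * z ^+ i = z ^+ n * (x - q`_0).
  have sq : (size q <= n.+1)%N by rewrite -sp.
  rewrite mulrBr {1}qx (horner_inv_rev z0 sq) big_ord_recl subn0 [q`_0 * _]mulrC.
  rewrite addrAC subrr add0r (reindex_inj rev_ord_inj); apply: eq_bigr => i _ /=.
  by rewrite subKn.
have c1 : c * (x^-1 * (x - q`_0)) = 1 by rewrite mulrBr mulVf // mulVf.
rewrite horner_poly; under eq_bigr do rewrite mulrDl.
rewrite big_split /=.
have -> : \sum_(i < n) p`_n / x * c * q`_(n - i) * z ^+ i = p`_n * z ^+ n.
  transitivity (p`_n / x * c * \sum_(i < n) q`_(n - i) * z ^+ i).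
    by rewrite mulr_sumr; apply: eq_bigr => i _; rewrite mulrA.
  by rewrite hA -[RHS]mulr1 -c1; ring.
by rewrite px horner_coef sp big_ord_recr.
Qed.

Lemma not_adjoin_both z : z != 0 -> adjoin S z x -> adjoin S z^-1 x -> False.
Proof.
move=> z0 [p Sp px] [q Sq qx].
have [N hN] : exists N, (size p + size q <= N)%N by exists (size p + size q).
elim: N z p q hN z0 Sp Sq px qx => [|N IH] z p q hN z0 Sp Sq px qx.
  move: hN; rewrite leqn0 addn_eq0 size_poly_eq0 => /andP [/eqP p0 _].
  by move: x0; rewrite px p0 horner0 eqxx.
wlog le_qp : z p q hN z0 Sp Sq px qx / (size q <= size p)%N.
  move=> hwlog; have [le_qp|/ltnW le_pq] := leqP (size q) (size p).
    exact: (hwlog z p q).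
  by apply: (hwlog z^-1 q p); rewrite ?invr_eq0 ?invrK // addnC.
have [p' [Sp' sp' p'x]] := horner_rep_shrink z0 Sp Sq px qx le_qp.
apply: (IH z p' q) => //; rewrite -ltnS; apply: leq_trans hN.
by rewrite ltn_add2r.
Qed.

Lemma maximal_avoiding_valring : valring S.
Proof.
split => // z z0.
have [Sz|adj_z] := mem_or_adjoin z; first by left.
have [Szi|adj_zi] := mem_or_adjoin z^-1; first by right.
by case: (not_adjoin_both z0 adj_z adj_zi).
Qed.

End MaximalAvoidingRing.

Lemma avoiding_chain_union (K : fieldType) (D : K -> Prop) x
    (F : (K -> Prop) -> Prop) X0 t0 :
  (forall X t, F X -> X t -> avoiding D x X) ->
  (forall X Y, F X -> F Y -> (forall t, X t -> Y t) \/ (forall t, Y t -> X t)) ->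
  F X0 -> X0 t0 -> avoiding D x (fun t => exists2 X, F X & X t).
Proof.
move=> avF chainF FX0 X0t0.
have hS X t : F X -> X t -> subring X by move=> FX /(avF _ _ FX) [].
have both a b : (exists2 X, F X & X a) -> (exists2 X, F X & X b) ->
    exists2 X, F X & X a /\ X b.
  move=> [X FX Xa] [Y FY Yb]; case: (chainF X Y FX FY) => [XY|YX].
    by exists Y => //; split => //; apply: XY.
  by exists X => //; split => //; apply: YX.
have [_ DX0 yX0 _] := avF _ _ FX0 X0t0.
split; first split.
- by exists X0 => //; apply: (subring0 (hS _ _ FX0 X0t0)).
- by exists X0 => //; apply: (subring1 (hS _ _ FX0 X0t0)).
- move=> a b ha hb; have [X FX [Xa Xb]] := both a b ha hb.
  by exists X => //; apply: (subringB (hS _ _ FX Xa)).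
- move=> a b ha hb; have [X FX [Xa Xb]] := both a b ha hb.
  by exists X => //; apply: (subringM (hS _ _ FX Xa)).
- by move=> d Dd; exists X0 => //; apply: DX0.
- by exists X0.
- by case=> X FX Xx; case: (avF _ _ FX Xx).
Qed.

Lemma valring_avoiding (K : fieldType) (D : K -> Prop) x : subring D ->
  ~ int_closure D x -> exists V, [/\ valring V, forall d, D d -> V d & ~ V x].
Proof.
move=> hD nix.
have x0 : x != 0.
  by apply: contra_notN nix => /eqP ->; apply: (subring0 (subring_int_closure hD)).
(* Zorn_bigcup also requires the union of the empty chain to be in P. *)
pose P S := (forall t, ~ S t) \/ avoiding D x S.
have [A [PA maxPA]] : exists A, P A /\ forall B, classical_sets.proper A B -> ~ P B.
  apply: classical_sets.Zorn_bigcup => F FP chainF.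
  have [[X0 [FX0 [t0 X0t0]]]|Fempty] := pselect (exists X, F X /\ exists t, X t).
    right; apply: (avoiding_chain_union _ chainF FX0 X0t0) => X t FX Xt.
    by case: (FP X FX) => // /(_ t).
  by left => t [X FX Xt]; apply: Fempty; exists X; split => //; exists t.
have avA : avoiding D x A.
  case: PA => // Aempty; case: (maxPA (adjoin D x^-1)); last first.
    right; split; [exact: (subring_adjoin hD) | exact: (adjoin_ge hD) | |].
      exact: adjoin_mem.
    exact: notin_adjoin_inv.
  split; first by move=> t /Aempty.
  move=> sub; apply: (Aempty 0); apply: sub.
  by apply: (adjoin_ge hD); apply: (subring0 hD).
have maxA T : avoiding D x T -> (forall t, A t -> T t) -> forall t, T t -> A t.
  move=> avT AT; apply: contrapT => nTA; apply: (maxPA T); last by right.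
  by split => // TA; apply: nTA => t; apply: TA.
exists A; case: (avA) => _ DA _ nAx; split => //.
exact: (maximal_avoiding_valring x0 avA maxA).
Qed.

Lemma zariski_open_witness (K : fieldType) (D : K -> Prop) n (a y : nat -> K) :
  zariski_open D (fun T => overring D T /\ is_inv_witness T n a y).
Proof.
move=> R [oR [y1 Ry]]; split => //.
exists [seq y i * a l | i <- iota 0 n, l <- iota 0 n]; split.
  move=> z /allpairsP [[i l] /= [hi hl ->]].
  by move: hi hl; rewrite !mem_iota !add0n => /andP [_ hi] /andP [_ hl]; apply: Ry.
move=> T oT hT; split => //; split => // i l hi hl; apply: hT.
by apply: allpairs_f; rewrite mem_iota add0n.
Qed.

Lemma valring_avoiding_witness (K : fieldType) (D : K -> Prop) n (a y : nat -> K) :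
  subring D -> ~ is_inv_witness (int_closure D) n a y ->
  exists V, [/\ valring V, forall d, D d -> V d &
    forall T, overring D T /\ is_inv_witness T n a y -> exists2 e, T e & ~ V e].
Proof.
move=> hD nwit.
have [y1|ny1] := pselect (\sum_(i < n) a i * y i = 1); last first.
  exists (fun _ => True); split => // [|T [_ [y1 _]]]; last by case: ny1.
  by split; [split | left].
have [i [l [hi hl nil]]] : exists i l,
    [/\ (i < n)%N, (l < n)%N & ~ int_closure D (y i * a l)].
  apply: contrapT => hall; apply: nwit; split => // i l hi hl.
  by apply: contrapT => nil; apply: hall; exists i, l.
have [V [vV DV nVe]] := valring_avoiding hD nil.
by exists V; split => // T [_ [_ RT]]; exists (y i * a l) => //; apply: RT.
Qed.

Lemma quasi_compact_prufer_overrings (K : fieldType) (D : K -> Prop) :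
  subring D -> is_quotient_field D -> prufer (int_closure D) ->
  quasi_compact D (fun R => overring D R /\ prufer R).
Proof.
move=> hD hK hP I U openU coverU.
have [i Ui] := coverU _ (conj (overring_int_closure hD) hP).
have [_ [F [Fi basicF]]] := openU i _ Ui.
exists 1%N, (fun _ => i) => R [[sR DR] pR]; exists ord0.
by apply: basicF => [//|x /Fi]; apply: (int_closure_sub_prufer sR pR hK DR).
Qed.

Theorem corollary6p2 (K : fieldType) (D : K -> Prop)
    (hD : subring D) (hK : is_quotient_field D) :
  prufer (int_closure D) <->
  quasi_compact D (fun R => overring D R /\ prufer R).
Proof.
split=> [|hQ]; first exact: quasi_compact_prufer_overrings.
apply: (prufer_of_inv_witness (subring_int_closure hD)) => gs Dgs gs_nz.
apply: contrapT => no_wit.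
pose U y T := overring D T /\ is_inv_witness T (size gs) (nth 0 gs) y.
have coverU R : overring D R /\ prufer R -> exists y, U y R.
  move=> [[sR DR] pR]; have Rgs g : g \in gs -> R g.
    by move/Dgs; apply: (int_closure_sub_prufer sR pR hK DR).
  by have [y wy] := inv_witness_of_prufer sR pR Rgs gs_nz; exists y.
have [m [f cover]] := hQ _ U (@zariski_open_witness K D (size gs) (nth 0 gs)) coverU.
have /choice [Vs hVs] : forall k, exists V, [/\ valring V, forall d, D d -> V d &
    forall T, U (f k) T -> exists2 e, T e & ~ V e].
  move=> k; apply: valring_avoiding_witness hD _ => wit.
  by apply: no_wit; exists (f k).
have valVs k : valring (Vs k) by case: (hVs k).
have [|k Uk] := cover (bigcap_ring Vs).
  split; last exact: prufer_bigcap.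
  split; first exact: subring_bigcap.
  by move=> d Dd k; case: (hVs k) => _ DV _; apply: DV.
have [_ _ /(_ _ Uk) [e Re nVe]] := hVs k.
exact/nVe/Re.
Qed.
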